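(* Consider an instance with $n$ agents, $m$ divisible items and binary additive valuations (notation as in the context), and let $x$ be a stable fractional allocation with profile $(h_1,\dots,h_n)$. If $d\neq d'$ are two values both attained by coordinates of the profile (i.e. $\mathsf{layer}^*_d$ and $\mathsf{layer}^*_{d'}$ are two different nonempty layers), then $|d-d'|\ge 1/n^2$.
   Context: Agents $[n]$, items $[m]$; each agent $i$ has a set $L_i\subseteq[m]$ of liked items. A fractional allocation is $x=(x_{o,i})$ with $x_{o,i}\ge0$, $\sum_i x_{o,i}\le1$ for each item $o$; clean if $x_{o,i}=0$ for $o\notin L_i$; max-USW if it maximizes $\sum_i\sum_{o\in L_i}x_{o,i}$; allocations are clean and max-USW; profile $h_i=\sum_o x_{o,i}$. A transfer $u\to v$: distinct agents $u=i_1,\dots,i_k=v$ ($k\ge2$), items $o_l$ with $x_{o_l,i_l}>0$, $o_l\in L_{i_{l+1}}$, amount $0<\Delta\le\min_l x_{o_l,i_l}$, moving $\Delta$ of $o_l$ from $i_l$ to $i_{l+1}$; narrowing if $h_u-\Delta\ge h_v+\Delta$; $x$ is stable if it admits no narrowing transfer. For real $d$, $\mathsf{layer}^*_d=\{i:h_i=d\}$. *)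

From HB Require Import structures.
From mathcomp Require Import all_boot all_order all_algebra.
From mathcomp Require Import reals.
Set Implicit Arguments. Unset Strict Implicit. Unset Printing Implicit Defensive.
Import Order.TTheory GRing.Theory Num.Theory.
Local Open Scope ring_scope.

Section Alloc.
Variables (R : realType) (n m : nat).
(* agents 'I_n, items 'I_m, L i = set of items liked by agent i *)
Variable L : 'I_n -> {set 'I_m}.
(* x o i = fraction of item o given to agent i *)
Implicit Types x y : 'I_m -> 'I_n -> R.

Definition fractional x : Prop :=
  (forall o i, 0 <= x o i) /\ (forall o, \sum_(i < n) x o i <= 1).

Definition clean x : Prop := forall o i, o \notin L i -> x o i = 0.

Definition usw x : R := \sum_(i < n) \sum_(o in L i) x o i.

Definition max_usw x : Prop :=
  fractional x /\ forall y, fractional y -> usw y <= usw x.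

Definition allocation x : Prop := fractional x /\ clean x /\ max_usw x.

Definition profile x (i : 'I_n) : R := \sum_(o < m) x o i.

(* A narrowing transfer along distinct agents ag 0, ..., ag (k+1)
   (so at least 2 agents), with items it 0, ..., it k: item it l is held
   by ag l in amount >= Delta > 0 and liked by ag (l+1). *)
Definition narrowing_transfer x : Prop :=
  exists (k : nat) (ag : 'I_k.+2 -> 'I_n) (it : 'I_k.+1 -> 'I_m) (D : R),
    [/\ injective ag, 0 < D,
        (forall l : 'I_k.+1,
            0 < x (it l) (ag (widen_ord (leqnSn _) l)) /\
            D <= x (it l) (ag (widen_ord (leqnSn _) l)) /\
            it l \in L (ag (lift ord0 l)))
      & profile x (ag ord_max) + D <= profile x (ag ord0) - D].

Definition stable x : Prop := ~ narrowing_transfer x.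

Definition layer x (d : R) : {set 'I_n} := [set i | profile x i == d].
End Alloc.

(* In a stable allocation an agent holding part of an item liked by another agent cannot have
   the larger profile, and in a max-USW allocation every item that is held at all is fully
   allocated.  Hence a set of agents closed upwards in the profile order holds each item either
   entirely or not at all, so its total profile is an integer.  Comparing the sets {h >= d} and
   {h > d} shows that c d is an integer, where c = |layer_d| lies in [1, n].  For two nonempty
   layers, c c' (d - d') is then a nonzero integer, whence |d - d'| >= 1/(c c') >= 1/n^2. *)
From mathcomp Require Import all_boot all_order all_algebra.
From mathcomp Require Import reals.
From mathcomp Require Import ring lra.
Import Order.TTheory GRing.Theory Num.Theory.
Local Open Scope ring_scope.

Lemma inv_le_norm_of_int_mul (R : archiNumFieldType) (a N t : R) :
  0 < a -> a <= N -> a * t \is a Num.int -> t != 0 -> N^-1 <= `|t|.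
Proof.
move=> a_gt0 aN at_int t_neq0.
have N_gt0 : 0 < N := lt_le_trans a_gt0 aN.
have := norm_intr_ge1 at_int (mulf_neq0 (lt0r_neq0 a_gt0) t_neq0).
rewrite normrM gtr0_norm // => le1_at.
rewrite -[N^-1]mulr1 ler_pdivrMl //.
exact: le_trans le1_at (ler_wpM2r (normr_ge0 t) aN).
Qed.

Section StableAllocation.
Context {R : realType} {n m : nat} {L : 'I_n -> {set 'I_m}} {x : 'I_m -> 'I_n -> R}.

Lemma clean_liked {o : 'I_m} {i : 'I_n} :
  clean L x -> 0 < x o i -> o \in L i.
Proof.
by move=> cl; apply: contraTT => /cl ->; rewrite ltxx.
Qed.

Lemma stable_profile_le {o : 'I_m} {u v : 'I_n} :
  stable L x -> 0 < x o u -> o \in L v -> profile x u <= profile x v.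
Proof.
move=> st xou_gt0 ov.
have [-> //|uv] := eqVneq u v.
rewrite leNgt; apply/negP => vu; apply: st.
pose ag (j : 'I_2) := if val j == 0%N then u else v.
pose D := Num.min (x o u) ((profile x u - profile x v) / 2).
have D_le_half : D <= (profile x u - profile x v) / 2 by rewrite ge_min lexx orbT.
exists 0%N, ag, (fun _ => o), D; split.
- move=> j1 j2; rewrite /ag.
  case: j1 => [[|[|?]] ?] //=; case: j2 => [[|[|?]] ?] //= E;
    by [apply: val_inj | rewrite E eqxx in uv].
- rewrite lt_min xou_gt0 /=; lra.
- by move=> l; rewrite /ag (ord1 l) /= xou_gt0 ge_min lexx.
- rewrite /ag /=; lra.
Qed.

Lemma max_usw_liked_full {o : 'I_m} {u : 'I_n} :
  max_usw L x -> o \in L u -> \sum_(i < n) x o i = 1.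
Proof.
move=> [[x_ge0 x_le1] x_max] ou.
apply/eqP; rewrite eq_le x_le1 /= leNgt; apply/negP => lt1.
pose e := 1 - \sum_(i < n) x o i.
pose y o' i := x o' i + (if (o' == o) && (i == u) then e else 0).
have y_frac : fractional y.
  split=> [o' i|o'].
  - rewrite /y; case: ifP => _; last by rewrite addr0.
    by apply: addr_ge0 => //; rewrite subr_ge0 ltW.
  - rewrite /y big_split /=; have [->|o'o] := eqVneq o' o.
    + by rewrite -big_mkcond big_pred1_eq /e addrC subrK.
    + by rewrite big1_eq addr0.
have usw_y : usw L y = usw L x + e.
  rewrite /usw /y; under eq_bigr do rewrite big_split /=; rewrite big_split /=.
  congr (_ + _); rewrite (bigD1 u) //= [X in _ + X]big1 => [|i /negPf iu]; last first.
    by rewrite big1 // => o' _; rewrite iu andbF.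
  by rewrite addr0 (bigD1 o) //= !eqxx big1 ?addr0 // => o' /andP[_ /negPf ->].
by have := x_max y y_frac; rewrite usw_y gerDl /e subr_le0 leNgt lt1.
Qed.

Definition profile_upclosed (P : pred 'I_n) :=
  forall u v, P u -> profile x u <= profile x v -> P v.

Hypotheses (x_alloc : allocation L x) (x_stable : stable L x).

Lemma upclosed_item_share (P : pred 'I_n) (o : 'I_m) :
  profile_upclosed P -> \sum_(i | P i) x o i \is a Num.nat.
Proof.
have [[x_ge0 _] [x_clean x_max]] := x_alloc.
move=> P_up; have [u /andP[Pu xou_gt0]|no_holder] := pickP (fun i => P i && (0 < x o i)).
- suff -> : \sum_(i | P i) x o i = 1 by exact: nat_num1.
  rewrite -(max_usw_liked_full x_max (clean_liked x_clean xou_gt0)).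
  rewrite [RHS](bigID P) /= [X in _ = _ + X]big1 ?addr0 // => i nPi.
  apply/eqP; rewrite eq_le x_ge0 andbT leNgt; apply: contra nPi => xoi_gt0.
  exact: P_up Pu (stable_profile_le x_stable xou_gt0 (clean_liked x_clean xoi_gt0)).
- rewrite big1 ?nat_num0 // => i Pi.
  apply/eqP; rewrite eq_le x_ge0 andbT leNgt.
  by move: (no_holder i); rewrite /= Pi => /negbT.
Qed.

Lemma upclosed_profile_sum_nat (P : pred 'I_n) :
  profile_upclosed P -> \sum_(i | P i) profile x i \is a Num.nat.
Proof.
move=> P_up; rewrite /profile exchange_big /=.
by apply: rpred_sum => o _; exact: upclosed_item_share.
Qed.

Lemma layer_card_mul_int (d : R) : #|layer x d|%:R * d \is a Num.int.
Proof.
have ge_up : profile_upclosed (fun i => d <= profile x i).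
  by move=> u v /= du uv; exact: le_trans uv.
have gt_up : profile_upclosed (fun i => d < profile x i).
  by move=> u v /= du uv; exact: lt_le_trans uv.
have -> : #|layer x d|%:R * d =
    \sum_(i | d <= profile x i) profile x i - \sum_(i | d < profile x i) profile x i.
  rewrite (bigID (fun i => profile x i == d)) /=.
  have -> : \sum_(i | (d <= profile x i) && (profile x i == d)) profile x i
      = \sum_(i in layer x d) d.
    apply: eq_big => [i|i /andP[_ /eqP //]].
    by rewrite inE; case: eqP => [->|]; rewrite ?lexx ?andbF.
  under [X in _ = _ + X - _]eq_bigl do rewrite andbC -lt_def.
  by rewrite addrK sumr_const mulr_natl.
by rewrite rpredB ?intr_nat ?upclosed_profile_sum_nat.
Qed.

End StableAllocation.

Theorem lemma8 (R : realType) (n m : nat) (L : 'I_n -> {set 'I_m})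
    (x : 'I_m -> 'I_n -> R) (d d' : R) :
  allocation L x -> stable L x ->
  layer x d != set0 -> layer x d' != set0 -> d != d' ->
  (n%:R ^+ 2)^-1 <= `|d - d'|.
Proof.
move=> x_alloc x_stable ne ne' dd'.
set c := #|layer x d|; set c' := #|layer x d'|.
have card_le_n (A : {set 'I_n}) : (#|A| <= n)%N by rewrite (leq_trans (max_card _)) ?card_ord.
apply: (@inv_le_norm_of_int_mul _ (c%:R * c'%:R)).
- by rewrite mulr_gt0 // ltr0n card_gt0.
- by rewrite expr2 ler_pM ?ler_nat ?card_le_n.
- have -> : c%:R * c'%:R * (d - d') = c'%:R * (c%:R * d) - c%:R * (c'%:R * d').
    by ring.
  have cd_int := layer_card_mul_int x_alloc x_stable d.
  have c'd'_int := layer_card_mul_int x_alloc x_stable d'.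
  by rewrite rpredB // rpredM ?natr_int.
- by rewrite subr_eq0.
Qed.
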